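(* $$\mathcal{I}_1\le\frac{4}{n^2}\cdot\frac{\phi_{\max}}{\phi_{\min}}.$$
   Context: Fix a prompt $x$, a countable response space, full-support conditional distributions $\pi_{\mathrm{target}},\pi_{\mathrm{gen}}$, a reward $r$, $\beta>0$, and $n\ge1$. Let $\phi_\beta(y|x)=\frac{\pi_{\mathrm{target}}(y|x)}{\pi_{\mathrm{gen}}(y|x)}e^{\beta r(y|x)}$, $\phi_{\max}=\max_{x,y}\phi_\beta(y|x)$, $\phi_{\min}=\min_{x,y}\phi_\beta(y|x)$, and $\Phi_\beta(s)=\mathbb{E}_{Y\sim\pi_{\mathrm{gen}}(\cdot|x)}[e^{-s\phi_\beta(Y|x)}]$ for $s\ge0$. Let $p_n=\log(n^4)/n$, $\mathcal{R}_1=\{(s_1,s_2)\in[0,\infty)^2:\min\{\Phi_\beta(s_1),\Phi_\beta(s_2)\}\le1-p_n\}$ and $$\mathcal{I}_1=\frac{1}{1-e^{-n}}\int_{\mathcal{R}_1}\big(n^2\Phi_\beta(s_1)\Phi_\beta(s_2)+n\big)\big(-\Phi_\beta'(0)\big)\big(-\Phi_\beta'(s_1+s_2)\big)\exp\big(n[\Phi_\beta(s_1)\Phi_\beta(s_2)-1]\big)\,ds_1\,ds_2.$$ *)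

From HB Require Import structures.
From mathcomp Require Import all_boot all_order all_algebra.
From mathcomp Require Import all_classical all_reals all_analysis.
Set Implicit Arguments. Unset Strict Implicit. Unset Printing Implicit Defensive.
Import Order.TTheory GRing.Theory Num.Theory.
Import numFieldNormedType.Exports.
Local Open Scope classical_set_scope.
Local Open Scope ring_scope.

Section Defs.
Variables (R : realType) (X : Type) (T : countType).

Definition full_support_distr (pi : X -> T -> R) : Prop :=
  forall x, (forall y, 0 < pi x y) /\ (\esum_(y in [set: T]) (pi x y)%:E = 1)%E.

Definition phib (pt pg r : X -> T -> R) (beta : R) (x : X) (y : T) : R :=
  pt x y / pg x y * expR (beta * r x y).

Definition Phib (pt pg r : X -> T -> R) (beta : R) (x : X) (s : R) : R :=
  fine (\esum_(y in [set: T]) (pg x y * expR (- s * phib pt pg r beta x y))%:E).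

Definition p_n (n : nat) : R := ln ((n%:R) ^+ 4) / n%:R.

Definition region1 (pt pg r : X -> T -> R) (beta : R) (x : X) (n : nat)
  : set (R * R) :=
  [set z | 0 <= z.1 /\ 0 <= z.2 /\
    Num.min (Phib pt pg r beta x z.1) (Phib pt pg r beta x z.2) <= 1 - p_n n].

Definition integrand1 (pt pg r : X -> T -> R) (beta : R) (x : X) (n : nat)
  (z : R * R) : R :=
  let Phi := Phib pt pg r beta x in
  ((n%:R) ^+ 2 * Phi z.1 * Phi z.2 + n%:R) * (- derive1 Phi 0)
  * (- derive1 Phi (z.1 + z.2)) * expR (n%:R * (Phi z.1 * Phi z.2 - 1)).

(* I_1, as an extended real (the integrand is nonnegative) *)
Definition I1 (pt pg r : X -> T -> R) (beta : R) (x : X) (n : nat) : \bar R :=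
  ((1 - expR (- n%:R))^-1)%:E *
  (\int[(@lebesgue_measure R \x @lebesgue_measure R)%E]_(z in region1 pt pg r beta x n)
     (integrand1 pt pg r beta x n z)%:E)%E.

End Defs.

From HB Require Import structures.
From mathcomp Require Import all_boot all_order all_algebra.
From mathcomp Require Import all_classical all_reals all_analysis.
From mathcomp Require Import measurable_realfun ring lra.
Import Order.TTheory GRing.Theory Num.Theory.
Import numFieldNormedType.Exports.
Local Open Scope classical_set_scope.
Local Open Scope ring_scope.
Set Implicit Arguments.
Unset Strict Implicit.
Unset Printing Implicit Defensive.

(* Write [Phi(s) = sum_t w_t exp (- s phi_t)] and
   [K(s) = sum_t w_t phi_t exp (- s phi_t)], with [w = pi_gen(.|x)] and
   [phi = phi_beta(.|x)].  Comparing difference quotients termwise with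
   [1 - h phi <= exp (- h phi)] gives [0 <= - Phi' <= K], so
   [- Phi'(0) <= K(0) <= phi_max].  On R_1 we have
   [Phi(s1) Phi(s2) <= 1 - p_n], so [exp (n (Phi(s1) Phi(s2) - 1)) <= n^-4]
   and the integrand is at most [(2 / n^2) phi_max K(s1 + s2)].  Now
   [w_t phi_t exp (- (s1 + s2) phi_t)] is [w_t / phi_t] times a product of two
   exponential densities of rate [phi_t], so by Tonelli the integral of
   [K(s1 + s2)] over the quadrant is [sum_t w_t / phi_t <= 1 / phi_min].
   Finally [1 / (1 - exp (- n)) <= 2]. *)

Section countable_esum.
Context (R : realType) (T : countType).
Local Open Scope ereal_scope.

Lemma esum_pickle (a : T -> \bar R) : (forall t, 0 <= a t) ->
  \esum_(t in [set: T]) a t = \sum_(k <oo) oapp a 0 (@pickle_inv T k).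
Proof.
move=> a0; rewrite nneseries_esumT; last by move=> k; case: (pickle_inv k).
under eq_esum do rewrite -[a _]/(oapp a 0 (Some _)) -pickleK_inv.
rewrite -(esum_image _ _ (fun k => oapp a 0 (@pickle_inv T k))); last first.
  by move=> u v _ _ /(congr1 (@pickle_inv T)); rewrite !pickleK_inv => -[].
rewrite [LHS]esum_mkcond; apply: eq_esum => k _; case: ifPn => // kI.
case Ek: (pickle_inv k) => [t|] //=; exfalso; move/negP: kI; apply.
by rewrite inE; exists t => //; have := @pickle_invK T k; rewrite Ek.
Qed.

Lemma esumZl (c : R) (a : T -> \bar R) : (0 <= c)%R -> (forall t, 0 <= a t) ->
  \esum_(t in [set: T]) (c%:E * a t) = c%:E * \esum_(t in [set: T]) a t.
Proof.
move=> c0 a0; rewrite !esum_pickle //; last by move=> t; rewrite mule_ge0.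
rewrite -nneseriesZl; last by move=> k _; case: (pickle_inv k).
by apply: eq_eseriesr => k _; case: (pickle_inv k) => //=; rewrite mule0.
Qed.

Lemma integral_esum d (U : measurableType d) (mu : {measure set U -> \bar R})
    (f : T -> U -> \bar R) :
  (forall t, measurable_fun [set: U] (f t)) -> (forall t u, 0 <= f t u) ->
  \int[mu]_u (\esum_(t in [set: T]) f t u) =
  \esum_(t in [set: T]) \int[mu]_u f t u.
Proof.
move=> mf f0; rewrite esum_pickle; last by move=> t; exact: integral_ge0.
under eq_integral do rewrite esum_pickle //.
rewrite integral_nneseries //.
- apply: eq_eseriesr => k _.
  by case: (@pickle_inv T k) => //=; rewrite integral0.
- by move=> k; case: (@pickle_inv T k) => //=; exact: measurable_cst.
- by move=> k u _; case: (@pickle_inv T k) => //= t; exact: f0.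
Qed.

End countable_esum.

(* [f] need not be measurable: the integrand of [I1] involves [derive1]. *)
Lemma le_integral_ge0r d (U : measurableType d) (R : realType)
    (mu : {measure set U -> \bar R}) (f g : U -> \bar R) :
  (forall u, (0 <= g u)%E) -> (forall u, (f u <= g u)%E) ->
  (\int[mu]_u f u <= \int[mu]_u g u)%E.
Proof.
move=> g0 fg; rewrite [leLHS]integralE.
apply: (@le_trans _ _ (\int[mu]_u f^\+ u)%E).
  rewrite -[leRHS]sube0 leeB// integral_ge0// => u _; exact: funeneg_ge0.
rewrite ge0_integralE; last by move=> u _; exact: funepos_ge0.
rewrite ge0_integralE; last by move=> u _; exact: g0.
apply: ge_ereal_sup => _ [h hf <-]; apply: ereal_sup_ubound; exists h => //.
move=> u; apply: le_trans (hf u) _.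
by rewrite !patch_setT funeposE ge_max fg g0.
Qed.

(* [derive1 f a] is [0] when the difference quotients diverge, hence [A 0]. *)
Lemma derive1_closed_right (R : realType) (f : R -> R) (a : R) (A : set R) :
  closed A -> A 0 ->
  (\forall h \near 0^'+, A (h^-1 * (f (h + a) - f a))) -> A (derive1 f a).
Proof.
move=> cA A0 fA; rewrite /derive1 /lim /lim_in; case: xgetP => [l -> dq|_] //.
exact: (closed_cvg _ cA fA _ (cvg_dnbhs_at_right dq)).
Qed.

Section laplace.
Context (R : realType) (T : countType) (w phi : T -> R) (M : R).
Hypotheses (w_ge0 : forall t, 0 <= w t)
  (w_sum1 : (\esum_(t in [set: T]) (w t)%:E = 1)%E)
  (phi_ge0 : forall t, 0 <= phi t)
  (M_ge0 : 0 <= M) (phi_le : forall t, phi t <= M).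

Definition laplace (s : R) : R :=
  fine (\esum_(t in [set: T]) (w t * expR (- s * phi t))%:E).

Definition laplace_moment (s : R) : R :=
  fine (\esum_(t in [set: T]) (w t * phi t * expR (- s * phi t))%:E).

Let expRN_le1 s t : 0 <= s -> expR (- s * phi t) <= 1.
Proof. by move=> s0; rewrite expR_le1 mulNr oppr_le0 mulr_ge0. Qed.

Let fineK_le (e : \bar R) (b : R) :
  (0 <= e)%E -> (e <= b%:E)%E -> (fine e)%:E = e.
Proof.
by move=> e0 eb; rewrite fineK// ge0_fin_numE// (le_lt_trans eb) ?ltry.
Qed.

Let laplace_esum_le1 s : 0 <= s ->
  (\esum_(t in [set: T]) (w t * expR (- s * phi t))%:E <= 1)%E.
Proof.
move=> s0; rewrite -w_sum1; apply: le_esum => t _.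
by rewrite lee_fin ler_piMr ?expRN_le1.
Qed.

Let laplace_moment_esum_le s : 0 <= s ->
  (\esum_(t in [set: T]) (w t * phi t * expR (- s * phi t))%:E <= M%:E)%E.
Proof.
move=> s0; rewrite -[M%:E]mule1 -w_sum1 -esumZl//.
apply: le_esum => t _.
rewrite lee_fin -mulrA mulrC ler_pM ?mulr_ge0 ?expR_ge0//.
by rewrite -[M]mulr1 ler_pM ?expR_ge0 ?expRN_le1.
Qed.

Lemma laplace_esumE s : 0 <= s ->
  \esum_(t in [set: T]) (w t * expR (- s * phi t))%:E = (laplace s)%:E.
Proof.
move=> s0; apply/esym/fineK_le/laplace_esum_le1 => //.
by apply: esum_ge0 => t _; rewrite lee_fin mulr_ge0 ?expR_ge0.
Qed.

Lemma laplace_moment_esumE s : 0 <= s ->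
  \esum_(t in [set: T]) (w t * phi t * expR (- s * phi t))%:E =
  (laplace_moment s)%:E.
Proof.
move=> s0; apply/esym/fineK_le/laplace_moment_esum_le => //.
by apply: esum_ge0 => t _; rewrite lee_fin !mulr_ge0 ?expR_ge0.
Qed.

Lemma laplace_ge0 s : 0 <= laplace s.
Proof.
by rewrite fine_ge0// esum_ge0// => t _; rewrite lee_fin mulr_ge0 ?expR_ge0.
Qed.

Lemma laplace_le1 s : 0 <= s -> laplace s <= 1.
Proof. by move=> s0; rewrite -lee_fin -laplace_esumE ?laplace_esum_le1. Qed.

Lemma laplace_moment_ge0 s : 0 <= laplace_moment s.
Proof.
by rewrite fine_ge0// esum_ge0// => t _; rewrite lee_fin !mulr_ge0 ?expR_ge0.
Qed.

Lemma laplace_moment_le s : 0 <= s -> laplace_moment s <= M.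
Proof.
by move=> s0; rewrite -lee_fin -laplace_moment_esumE ?laplace_moment_esum_le.
Qed.

Lemma le_laplace s s' : 0 <= s -> s <= s' -> laplace s' <= laplace s.
Proof.
move=> s0 ss'; rewrite -lee_fin -!laplace_esumE ?(le_trans s0)//.
apply: le_esum => t _; rewrite lee_fin ler_wpM2l// ler_expR !mulNr lerN2.
exact: ler_wpM2r.
Qed.

(* termwise, this is [1 - h phi <= exp (- h phi)] *)
Lemma laplace_le_shift s h : 0 <= s -> 0 <= h ->
  laplace s <= laplace (s + h) + h * laplace_moment s.
Proof.
move=> s0 h0; rewrite -lee_fin EFinD EFinM -(laplace_esumE s0).
rewrite -(laplace_esumE (addr_ge0 s0 h0)) -(laplace_moment_esumE s0).
rewrite -esumZl//; last by move=> t; rewrite lee_fin !mulr_ge0 ?expR_ge0.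
rewrite -esumD; last 2 first.
- by move=> t _; rewrite lee_fin mulr_ge0 ?expR_ge0.
- by move=> t _; rewrite lee_fin !mulr_ge0 ?expR_ge0.
apply: le_esum => t _; rewrite -EFinM -EFinD lee_fin.
rewrite (_ : - (s + h) * phi t = - s * phi t + - h * phi t); last by ring.
rewrite expRD; set A := expR (- s * phi t); set B := expR (- h * phi t).
have : 0 <= w t * A * (B - (1 + - h * phi t)).
  by rewrite !mulr_ge0 ?expR_ge0 ?subr_ge0 ?expR_ge1Dx.
nra.
Qed.

Lemma derive1_laplace_bound s : 0 <= s ->
  - laplace_moment s <= derive1 laplace s <= 0.
Proof.
move=> s0; pose A := [set y : R | - laplace_moment s <= y <= 0].
have cA : closed A.
  rewrite (_ : A = [set y | - laplace_moment s <= y] `&` [set y | y <= 0]).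
    by apply: closedI; [exact: closed_ge | exact: closed_le].
  by apply/seteqP; split => y /= /andP.
apply: (@derive1_closed_right R laplace s A cA).
  by rewrite /A /= lexx oppr_le0 laplace_moment_ge0.
near=> h; have h0 : 0 < h by near: h; exact: nbhs_right_gt.
rewrite /A /= [h + s]addrC pmulr_rle0 ?invr_gt0// subr_le0.
have ssh : s <= s + h by rewrite lerDl ltW.
rewrite (le_laplace s0 ssh) andbT ler_pdivlMl//.
by have := laplace_le_shift s0 (ltW h0); lra.
Unshelve. all: by end_near.
Qed.

Lemma laplace_moment_exponential_pdf s1 s2 : (forall t, 0 < phi t) ->
  0 <= s1 -> 0 <= s2 ->
  (laplace_moment (s1 + s2))%:E = \esum_(t in [set: T])
    (w t / phi t *
      (exponential_pdf (phi t) s1 * exponential_pdf (phi t) s2))%:E.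
Proof.
move=> phi_gt0 s10 s20; rewrite -laplace_moment_esumE ?addr_ge0//.
apply: eq_esum => t _; rewrite !exponential_pdfE//; congr EFin.
rewrite (_ : - (s1 + s2) * phi t = - phi t * s1 + - phi t * s2); last by ring.
by rewrite expRD; field; exact: lt0r_neq0.
Qed.

End laplace.

Local Notation lebesgue2 := (@lebesgue_measure _ \x @lebesgue_measure _)%E.

Section exponential_pdf2.
Context (R : realType).

Lemma measurable_exponential_pdf2 (r : R) :
  measurable_fun [set: R * R]
    (fun z : R * R => exponential_pdf r z.1 * exponential_pdf r z.2).
Proof.
by apply: measurable_funM; apply: measurableT_comp => //;
  exact: measurable_exponential_pdf.
Qed.

Lemma integral_exponential_pdf2 (r : R) : 0 < r ->
  (\int[lebesgue2]_z (exponential_pdf r z.1 * exponential_pdf r z.2)%:E = 1)%E.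
Proof.
move=> r0; have pdf0 u : 0 <= exponential_pdf r u.
  exact/exponential_pdf_ge0/ltW.
have mpdf := measurable_exponential_pdf r.
rewrite fubini_tonelli1 //=; last 2 first.
- by apply/measurable_EFinP; exact: measurable_exponential_pdf2.
- by move=> z; rewrite lee_fin mulr_ge0.
rewrite /fubini_F -[RHS](integral_exponential_pdf r0).
apply: eq_integral => u _ /=.
under eq_integral do rewrite EFinM.
rewrite ge0_integralZl_EFin //.
- by rewrite integral_exponential_pdf // mule1.
- by move=> y _; rewrite lee_fin.
- by apply/measurable_EFinP; exact: mpdf.
Qed.

End exponential_pdf2.

Lemma expR_p_n_le (R : realType) (n : nat) (u : R) : (1 <= n)%N ->
  u <= 1 - p_n R n -> expR (n%:R * (u - 1)) <= (n%:R ^+ 4)^-1.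
Proof.
move=> n1 up; have n0 : 0 < n%:R :> R by rewrite ltr0n.
rewrite -[_^-1]lnK ?posrE ?invr_gt0 ?exprn_gt0//.
rewrite ler_expR lnV ?posrE ?exprn_gt0//.
have -> : ln (n%:R ^+ 4) = n%:R * p_n R n by rewrite /p_n mulrC divfK ?gt_eqF.
by rewrite -mulrN; apply: ler_wpM2l; [exact: ltW | lra].
Qed.

Lemma invr_1_sub_expRN_le2 (R : realType) (t : R) : 1 <= t ->
  (1 - expR (- t))^-1 <= 2.
Proof.
move=> t1; have e2 : 2 <= expR t by have := expR_ge1Dx t; lra.
have et0 : 0 < expR t by exact: expR_gt0.
have -> : 1 - expR (- t) = (expR t - 1) / expR t.
  by rewrite expRN; field; exact: lt0r_neq0.
rewrite invf_div ler_pdivrMr ?subr_gt0; lra.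
Qed.

Section region1_bound.
Context (R : realType) (X : Type) (T : countType) (pt pg r : X -> T -> R).
Context (beta : R) (x : X) (n : nat) (m M : R).
Local Notation w := (pg x).
Local Notation phi := (phib pt pg r beta x).
Hypotheses (w_ge0 : forall t, 0 <= w t)
  (w_sum1 : (\esum_(t in [set: T]) (w t)%:E = 1)%E)
  (m_gt0 : 0 < m) (phi_ge : forall t, m <= phi t)
  (M_ge0 : 0 <= M) (phi_le : forall t, phi t <= M) (n_ge1 : (1 <= n)%N).

Let phi_ge0 t : 0 <= phi t. Proof. exact: le_trans (ltW m_gt0) (phi_ge t). Qed.

Lemma integrand1_le z : region1 pt pg r beta x n z ->
  integrand1 pt pg r beta x n z <=
  2 / n%:R ^+ 2 * M * laplace_moment w phi (z.1 + z.2).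
Proof.
move=> [z1 [z2 zmin]]; have S0 : 0 <= z.1 + z.2 by rewrite addr_ge0.
set nn : R := n%:R; have nn1 : 1 <= nn by rewrite /nn ler1n.
have nn_gt0 : 0 < nn by rewrite /nn ltr0n.
set P1 := laplace w phi z.1; set P2 := laplace w phi z.2.
set D0 := derive1 (laplace w phi) 0.
set DS := derive1 (laplace w phi) (z.1 + z.2).
set K := laplace_moment w phi (z.1 + z.2).
change ((nn ^+ 2 * P1 * P2 + nn) * - D0 * - DS * expR (nn * (P1 * P2 - 1)) <=
  2 / nn ^+ 2 * M * K).
have P10 : 0 <= P1 := laplace_ge0 phi w_ge0 z.1.
have P20 : 0 <= P2 := laplace_ge0 phi w_ge0 z.2.
have P11 : P1 <= 1 := laplace_le1 w_ge0 w_sum1 phi_ge0 z1.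
have P21 : P2 <= 1 := laplace_le1 w_ge0 w_sum1 phi_ge0 z2.
have /andP[D0_ge D0_le0] : - laplace_moment w phi 0 <= D0 <= 0 :=
  derive1_laplace_bound w_ge0 w_sum1 phi_ge0 M_ge0 phi_le (lexx 0).
have /andP[DS_ge DS_le0] : - K <= DS <= 0 :=
  derive1_laplace_bound w_ge0 w_sum1 phi_ge0 M_ge0 phi_le S0.
have K0_le : laplace_moment w phi 0 <= M :=
  laplace_moment_le w_ge0 w_sum1 phi_ge0 M_ge0 phi_le (lexx 0).
have P12_le : P1 * P2 <= 1 - p_n R n.
  by apply: le_trans zmin; rewrite le_min ler_piMr ?ler_piMl.
have first_ge0 : 0 <= nn ^+ 2 * P1 * P2 + nn.
  by apply: addr_ge0 (ltW nn_gt0); rewrite !mulr_ge0// exprn_ge0// ltW.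
have first_le : nn ^+ 2 * P1 * P2 + nn <= 2 * nn ^+ 2.
  rewrite mulr_natl mulr2n -mulrA; apply: lerD.
    by apply: ler_piMr; [exact: exprn_ge0 (ltW nn_gt0) | exact: mulr_ile1].
  by rewrite expr2 ler_peMr// ltW.
have D0_le : - D0 <= M by rewrite lerNl (le_trans _ D0_ge)// lerN2.
have DS_le : - DS <= K by rewrite lerNl.
have D0_ge0 : 0 <= - D0 by rewrite oppr_ge0; exact: D0_le0.
have DS_ge0 : 0 <= - DS by rewrite oppr_ge0; exact: DS_le0.
have AB0 := mulr_ge0 first_ge0 D0_ge0.
apply: le_trans (ler_pM (mulr_ge0 AB0 DS_ge0) (expR_ge0 _)
  (ler_pM AB0 DS_ge0 (ler_pM first_ge0 D0_ge0 first_le D0_le) DS_le)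
  (expR_p_n_le n_ge1 P12_le)) _.
rewrite le_eqVlt; apply/orP; left; apply/eqP; field.
by rewrite gt_eqF.
Qed.

Lemma integral_region1_le :
  (\int[lebesgue2]_(z in region1 pt pg r beta x n)
     (integrand1 pt pg r beta x n z)%:E <= (2 / n%:R ^+ 2 * (M / m))%:E)%E.
Proof.
set C := 2 / n%:R ^+ 2 * M.
have C_ge0 : 0 <= C by rewrite mulr_ge0// divr_ge0// exprn_ge0.
have phi_gt0 t : 0 < phi t := lt_le_trans m_gt0 (phi_ge t).
pose g t := C * (w t / phi t).
have g_ge0 t : 0 <= g t by rewrite mulr_ge0// divr_ge0.
have pdf2_ge0 t (z : R * R) :
    0 <= exponential_pdf (phi t) z.1 * exponential_pdf (phi t) z.2.
  by rewrite mulr_ge0// exponential_pdf_ge0.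
(* [G z = C * laplace_moment (z.1 + z.2)] on the quadrant, rewritten as a
   mixture of products of exponential densities so that it integrates to
   [\sum_t g t]. *)
pose G z := (\esum_(t in [set: T])
  (g t * (exponential_pdf (phi t) z.1 * exponential_pdf (phi t) z.2))%:E)%E.
have G_ge0 z : (0 <= G z)%E by apply: esum_ge0 => t _; rewrite lee_fin mulr_ge0.
have integrand_le_G z : ((fun z => (integrand1 pt pg r beta x n z)%:E)
    \_ (region1 pt pg r beta x n) z <= G z)%E.
  rewrite patchE; case: ifPn => [/set_mem zR|_]; last exact: G_ge0.
  have [z1 [z2 _]] := zR.
  have -> : G z = (C * laplace_moment w phi (z.1 + z.2))%:E.
    rewrite EFinM (laplace_moment_exponential_pdf w_ge0 w_sum1 phi_ge0 M_ge0
      phi_le phi_gt0 z1 z2).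
    rewrite -esumZl//; last by move=> t; rewrite lee_fin mulr_ge0// divr_ge0.
    by apply: eq_esum => t _; rewrite /g -EFinM !mulrA.
  by rewrite lee_fin; exact: integrand1_le.
rewrite integral_mkcond.
apply: le_trans (@le_integral_ge0r _ _ _ lebesgue2 _ _ G_ge0 integrand_le_G) _.
rewrite integral_esum; last 2 first.
- move=> t; apply/measurable_EFinP.
  apply: measurable_funM; first exact: measurable_cst.
  exact: measurable_exponential_pdf2.
- by move=> t z; rewrite lee_fin mulr_ge0.
apply: (@le_trans _ _ (\esum_(t in [set: T]) ((C / m)%:E * (w t)%:E))%E).
  apply: le_esum => t _.
  under eq_integral do rewrite EFinM.
  rewrite ge0_integralZl_EFin//; last 2 first.
  - by move=> z _; rewrite lee_fin.
  - by apply/measurable_EFinP; exact: measurable_exponential_pdf2.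
  rewrite integral_exponential_pdf2// mule1 -EFinM lee_fin /g.
  rewrite [C / m * _]mulrAC -mulrA.
  apply: (ler_wpM2l C_ge0); apply: (ler_wpM2l (w_ge0 t)).
  by rewrite lef_pV2 ?posrE.
have Cm_ge0 : 0 <= C / m by rewrite divr_ge0// ltW.
rewrite (esumZl Cm_ge0); last by move=> t; rewrite lee_fin.
by rewrite w_sum1 mule1 /C -mulrA.
Qed.

End region1_bound.

Theorem lemmaD4 (R : realType) (X : Type) (T : countType)
  (pt pg r : X -> T -> R) (beta : R) (n : nat) (x : X) (phimax phimin : R) :
  full_support_distr pt -> full_support_distr pg ->
  0 < beta -> (1 <= n)%N ->
  (forall x' y, phib pt pg r beta x' y <= phimax) ->
  (exists x' y, phib pt pg r beta x' y = phimax) ->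
  (forall x' y, phimin <= phib pt pg r beta x' y) ->
  (exists x' y, phib pt pg r beta x' y = phimin) ->
  (I1 pt pg r beta x n <= (4 / (n%:R) ^+ 2 * (phimax / phimin))%:E)%E.
Proof.
move=> pt_pos pg_pos _ n_ge1 phi_le _ phi_ge [x' [y' phimin_eq]].
have [pg_gt0 pg_sum1] := pg_pos x.
have phimin_gt0 : 0 < phimin.
  have [pt_gt0 _] := pt_pos x'; have [pg'_gt0 _] := pg_pos x'.
  by rewrite -phimin_eq /phib mulr_gt0 ?expR_gt0// divr_gt0.
have phimax_ge0 : 0 <= phimax.
  exact: le_trans (ltW phimin_gt0) (le_trans (phi_ge x' y') (phi_le x' y')).
have I_le := integral_region1_le (fun t => ltW (pg_gt0 t)) pg_sum1 phimin_gt0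
  (phi_ge x) phimax_ge0 (phi_le x) n_ge1.
rewrite /I1; apply: le_trans (lee_wpmul2l _ I_le) _.
  by rewrite lee_fin invr_ge0 subr_ge0 expR_le1 oppr_le0 ler0n.
rewrite -EFinM lee_fin.
rewrite (_ : 4 / _ * _ = 2 * (2 / n%:R ^+ 2 * (phimax / phimin))).
  apply: ler_wpM2r; first by rewrite !mulr_ge0 ?invr_ge0 ?exprn_ge0// ltW.
  by apply: invr_1_sub_expRN_le2; rewrite ler1n.
by rewrite !mulrA -natrM.
Qed.
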